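(* Let $\mathcal{H}$ be a hierarchical generator, $\varphi\in\mathcal{H}$, $k\ge0$, and $\psi\in\mathrm{ch}^k(\varphi)\cap\mathcal{H}$. Then $k\le\mathrm{gap}_{\mathcal{H}}(\psi)\le\mathrm{gap}_{\mathcal{H}}(\varphi)+k$.
   Context: Fix integers $d\ge1$, $n\ge2$, $m\ge2$; $s=n-1$, $p=m-1$. B-splines $\varphi^\ell_{\vec i}(\vec x)=\prod_kQ(n^\ell x_k-i_k)$ for $\ell\ge0$, $\vec i\in\mathbb{Z}^d$, $Q$ the uniform B-spline of order $m$ with knots $0,\dots,m$; $\mathfrak{B}$ the set of all of them; $\mathcal{B}^0=\{\varphi^0_{\vec i}:\vec i\in[-p:0]^d\}$. Children $\mathrm{ch}(\varphi^\ell_{\vec i})=\{\varphi^{\ell+1}_{\vec k}:n\vec i\le\vec k\le n\vec i+sm\}$, extended to sets by union, $\mathrm{ch}^k$ iterated. Cells $I^\ell_{\vec i}=\prod_k[i_kn^{-\ell},(i_k+1)n^{-\ell})$, cell children $\mathrm{ch}(I^\ell_{\vec i})=\{I^{\ell+1}_{\vec k}:n\vec i\le\vec k\le n\vec i+s\}$, $\mathrm{ch}^k$ iterated, $\mathrm{ch}^{-k}(I)=\{J:I\in\mathrm{ch}^k(J)\}$. $\mathbb{I}(\varphi^\ell_{\vec i})=\{I^\ell_{\vec k}:\vec i\le\vec k\le\vec i+p\}$, $\mathbb{I}^k(\varphi)=\mathrm{ch}^k(\mathbb{I}(\varphi))$ ($k\in\mathbb{Z}$), $\mathbb{B}^k(I)=\{\varphi\in\mathfrak{B}:I\in\mathbb{I}^{-k}(\varphi)\}$,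 extended to sets by union; $\mathcal{O}(\varphi,j,\mathcal{H})=\mathbb{B}^j(\mathbb{I}(\varphi))\cap\mathcal{H}$. A lineage is a finite $\mathcal{L}\subset\mathfrak{B}$ with $\mathcal{L}\subset\mathcal{B}^0\cup\mathrm{ch}(\mathcal{L})$; its hierarchical generator is $(\mathcal{B}^0\cup\mathrm{ch}(\mathcal{L}))\setminus\mathcal{L}$. For $\varphi\in\mathcal{H}$, $\mathrm{gap}_{\mathcal{H}}(\varphi)=\sup\{g\in\mathbb{Z}:\mathcal{O}(\varphi,-g,\mathcal{H})\neq\emptyset\}$. *)

From Stdlib Require Import ZArith List.
From Stdlib Require Fin.
Open Scope Z_scope.

Definition vec (d : nat) := Fin.t d -> Z.

(* B-spline phi^l_i is represented by its level l and index i
   (the map (l,i) |-> phi^l_i is injective). *)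
Record bspline (d : nat) := mkB { blev : nat; bidx : vec d }.
Record cell (d : nat) := mkC { clev : nat; cidx : vec d }.
Arguments mkB {d}. Arguments blev {d}. Arguments bidx {d}.
Arguments mkC {d}. Arguments clev {d}. Arguments cidx {d}.

Section Defs.
Variables (d : nat) (n m : Z).
(* s = n - 1, p = m - 1 *)

Definition chB (phi psi : bspline d) : Prop :=
  blev psi = S (blev phi) /\
  forall j, n * bidx phi j <= bidx psi j <= n * bidx phi j + (n - 1) * m.

Fixpoint chBk (k : nat) (phi psi : bspline d) : Prop :=
  match k with
  | O => psi = phi
  | S k' => exists chi, chBk k' phi chi /\ chB chi psi
  end.

Definition chSet (L : bspline d -> Prop) (psi : bspline d) : Prop :=
  exists phi, L phi /\ chB phi psi.

Definition B0 (phi : bspline d) : Prop :=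
  blev phi = 0%nat /\ forall j, - (m - 1) <= bidx phi j <= 0.

Definition is_lineage (L : bspline d -> Prop) : Prop :=
  (exists l : list (bspline d), forall phi, L phi <-> In phi l) /\
  (forall phi, L phi -> B0 phi \/ chSet L phi).

Definition is_hier_gen (H : bspline d -> Prop) : Prop :=
  exists L, is_lineage L /\
    forall psi, H psi <-> ((B0 psi \/ chSet L psi) /\ ~ L psi).

Definition chC (I J : cell d) : Prop :=
  clev J = S (clev I) /\
  forall j, n * cidx I j <= cidx J j <= n * cidx I j + (n - 1).

Fixpoint chCk (k : nat) (I J : cell d) : Prop :=
  match k with
  | O => J = I
  | S k' => exists K, chCk k' I K /\ chC K J
  end.

Definition II (phi : bspline d) (I : cell d) : Prop :=
  clev I = blev phi /\ forall j, bidx phi j <= cidx I j <= bidx phi j + (m - 1).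

(* II^k(phi) = ch^k(II(phi)) for k in Z; for k < 0,
   ch^k(I) = { J : I in ch^{-k}(J) } *)
Definition IIk (k : Z) (phi : bspline d) (J : cell d) : Prop :=
  exists I, II phi I /\
    (if 0 <=? k then chCk (Z.to_nat k) I J else chCk (Z.to_nat (- k)) J I).

Definition BBk (k : Z) (I : cell d) (phi : bspline d) : Prop := IIk (- k) phi I.

Definition BBkSet (k : Z) (S : cell d -> Prop) (phi : bspline d) : Prop :=
  exists I, S I /\ BBk k I phi.

Definition Ov (phi : bspline d) (j : Z) (H : bspline d -> Prop)
  (psi : bspline d) : Prop := BBkSet j (II phi) psi /\ H psi.

Definition Zsup_is (P : Z -> Prop) (g : Z) : Prop :=
  (forall x, P x -> x <= g) /\ (forall u, (forall x, P x -> x <= u) -> g <= u).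

Definition is_gap (H : bspline d -> Prop) (phi : bspline d) (g : Z) : Prop :=
  Zsup_is (fun g' => exists psi, Ov phi (- g') H psi) g.
End Defs.

(* The cells supporting a child of [phi] are children of cells supporting [phi]; hence
   the support of a descendant [psi] in [ch^k(phi)] lies exactly [k] generations below
   that of [phi], which gives [gap psi >= k]. Conversely, a cell has a unique ancestor
   in each earlier generation, so any [chi] whose support lies [g >= k] generations
   above that of [psi] has its support [g - k] generations above that of [phi], which
   gives [gap psi <= gap phi + k]. *)
From Stdlib Require Import ZArith List Lia Classical FunctionalExtensionality.
Open Scope Z_scope.

Lemma Zsup_exists (P : Z -> Prop) (x0 b : Z) :
  P x0 -> (forall x, P x -> x <= b) -> exists g, Zsup_is P g.
Proof.
  intros h0 hb; assert (hN : b - x0 <= Z.of_nat (Z.to_nat (b - x0))) by lia.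
  generalize dependent (Z.to_nat (b - x0)); intros N; revert x0 h0.
  induction N as [|N IH]; intros x0 h0 hN.
  - exists x0; split; [intros x hx; specialize (hb x hx); lia|].
    intros u hu; exact (hu x0 h0).
  - destruct (classic (exists x, P x /\ x0 < x)) as [[x1 [h1 lt]]|hmax].
    + apply (IH x1 h1); lia.
    + exists x0; split.
      * intros x hx; apply Z.nlt_ge; intro lt; eauto.
      * intros u hu; exact (hu x0 h0).
Qed.

Section Cells.
Variables (d : nat) (n : Z).
Hypothesis hn : 2 <= n.

Lemma chCk_clev (k : nat) (I J : cell d) :
  chCk d n k I J -> clev J = (clev I + k)%nat.
Proof.
  revert J; induction k as [|k IH]; intros J h; simpl in h.
  - subst; lia.
  - destruct h as [K [hK [hlev _]]]; rewrite hlev, (IH K hK); lia.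
Qed.

Lemma chCk_add (a b : nat) (I J : cell d) :
  chCk d n (a + b) I J -> exists K, chCk d n a I K /\ chCk d n b K J.
Proof.
  revert J; induction b as [|b IH]; intros J h.
  - rewrite Nat.add_0_r in h; now exists J.
  - rewrite Nat.add_succ_r in h; destruct h as [K' [h1 h2]].
    destruct (IH K' h1) as [K [hK1 hK2]]; exists K; split; [exact hK1|].
    now exists K'.
Qed.

Lemma chC_parent_unique (A A' I : cell d) : chC d n A I -> chC d n A' I -> A = A'.
Proof.
  destruct A as [l i], A' as [l' i']; intros [hl hi] [hl' hi']; simpl in *.
  assert (l = l') as <- by lia; f_equal.
  apply functional_extensionality; intro j.
  specialize (hi j); specialize (hi' j); nia.
Qed.

Lemma chCk_ancestor_unique (k : nat) (A A' I : cell d) :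
  chCk d n k A I -> chCk d n k A' I -> A = A'.
Proof.
  revert I; induction k as [|k IH]; intros I h h'; simpl in *.
  - congruence.
  - destruct h as [K [h1 h2]], h' as [K' [h1' h2']].
    rewrite (chC_parent_unique K K' I h2 h2') in h1; eauto.
Qed.

End Cells.

Section Supports.
Variables (d : nat) (n m : Z).
Hypothesis hn : 2 <= n.
Hypothesis hm : 2 <= m.

Lemma II_first_cell (phi : bspline d) : II d m phi (mkC (blev phi) (bidx phi)).
Proof. split; [reflexivity|intro j; simpl; lia]. Qed.

(* The parent of a cell [I] of level [l + 1] is the cell of level [l] with index [I / n]. *)
Lemma II_chB_parent (phi psi : bspline d) (I : cell d) :
  chB d n m phi psi -> II d m psi I -> exists A, II d m phi A /\ chC d n A I.
Proof.
  intros [hlev hidx] [hIlev hIidx].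
  exists (mkC (blev phi) (fun j => cidx I j / n)).
  assert (hdiv : forall j, n * (cidx I j / n) <= cidx I j <= n * (cidx I j / n) + (n - 1)).
  { intro j; pose proof (Z.div_mod (cidx I j) n ltac:(lia)).
    pose proof (Z.mod_pos_bound (cidx I j) n ltac:(lia)); lia. }
  split; split; simpl; auto.
  - intro j; specialize (hidx j); specialize (hIidx j); specialize (hdiv j).
    set (q := cidx I j / n) in *; nia.
  - now rewrite hIlev, hlev.
Qed.

Lemma II_chBk_ancestor (k : nat) (phi psi : bspline d) (I : cell d) :
  chBk d n m k phi psi -> II d m psi I -> exists A, II d m phi A /\ chCk d n k A I.
Proof.
  revert psi I; induction k as [|k IH]; intros psi I hch hI; simpl in hch.
  - subst; now exists I.
  - destruct hch as [chi [hk h1]].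
    destruct (II_chB_parent chi psi I h1 hI) as [B [hB hBI]].
    destruct (IH chi B hk hB) as [A [hA hAB]].
    exists A; split; [exact hA|]; now exists B.
Qed.

Definition supp_descends (g : nat) (chi phi : bspline d) : Prop :=
  exists J I, II d m chi J /\ II d m phi I /\ chCk d n g J I.

Lemma supp_descends_refl (phi : bspline d) : supp_descends 0 phi phi.
Proof.
  exists (mkC (blev phi) (bidx phi)), (mkC (blev phi) (bidx phi)).
  split; [apply II_first_cell|split; [apply II_first_cell|reflexivity]].
Qed.

Lemma supp_descends_le_blev (g : nat) (chi phi : bspline d) :
  supp_descends g chi phi -> (g <= blev phi)%nat.
Proof.
  intros (J & I & [hJ _] & [hI _] & h).
  apply chCk_clev in h; lia.
Qed.

Lemma supp_descends_chBk (k : nat) (phi psi : bspline d) :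
  chBk d n m k phi psi -> supp_descends k phi psi.
Proof.
  intro hch; destruct (II_chBk_ancestor k phi psi _ hch (II_first_cell psi)) as [A [hA h]].
  exists A, (mkC (blev psi) (bidx psi)); split; [exact hA|split; [apply II_first_cell|exact h]].
Qed.

Lemma supp_descends_chBk_inv (k g : nat) (chi phi psi : bspline d) :
  chBk d n m k phi psi -> supp_descends (g + k) chi psi -> supp_descends g chi phi.
Proof.
  intros hch (J & I & hJ & hI & h).
  destruct (chCk_add d n g k J I h) as [K [hJK hKI]].
  destruct (II_chBk_ancestor k phi psi I hch hI) as [A [hA hAI]].
  rewrite (chCk_ancestor_unique d n hn k K A I hKI hAI) in hJK.
  now exists J, A.
Qed.

Section Gap.
Variable H : bspline d -> Prop.

Lemma Ov_of_nat (g : nat) (phi chi : bspline d) :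
  Ov d n m phi (- Z.of_nat g) H chi <-> H chi /\ supp_descends g chi phi.
Proof.
  unfold Ov, BBkSet, BBk, IIk, supp_descends.
  rewrite Z.opp_involutive, (proj2 (Z.leb_le 0 (Z.of_nat g)) (Nat2Z.is_nonneg g)),
    Nat2Z.id.
  split.
  - intros [(I & hI & J & hJ & h) hchi]; split; [exact hchi|now exists J, I].
  - intros [hchi (J & I & hJ & hI & h)]; split; [|exact hchi].
    exists I; split; [exact hI|now exists J].
Qed.

Lemma Ov_nonneg_descends (x : Z) (phi chi : bspline d) :
  0 <= x -> Ov d n m phi (- x) H chi -> H chi /\ supp_descends (Z.to_nat x) chi phi.
Proof. intros hx; rewrite <- (Z2Nat.id x hx) at 1; apply Ov_of_nat. Qed.

Lemma gap_exists (phi : bspline d) : H phi -> exists g, is_gap d n m H phi g.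
Proof.
  intro hphi; apply (Zsup_exists _ 0 (Z.of_nat (blev phi))).
  - exists phi; apply (Ov_of_nat 0); split; [exact hphi|apply supp_descends_refl].
  - intros x [chi hOv]; destruct (Z.le_gt_cases 0 x) as [hx|hx]; [|lia].
    destruct (Ov_nonneg_descends x phi chi hx hOv) as [_ hdesc].
    apply supp_descends_le_blev in hdesc; lia.
Qed.

Lemma gap_ge (phi chi : bspline d) (g : nat) (gap : Z) :
  is_gap d n m H phi gap -> H chi -> supp_descends g chi phi -> Z.of_nat g <= gap.
Proof. intros [hub _] hchi hdesc; apply hub; exists chi; now apply Ov_of_nat. Qed.

Lemma gap_le (phi : bspline d) (gap u : Z) :
  is_gap d n m H phi gap -> 0 <= u ->
  (forall g chi, H chi -> supp_descends g chi phi -> Z.of_nat g <= u) -> gap <= u.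
Proof.
  intros [_ hlub] hu hbound; apply hlub; intros x [chi hOv].
  destruct (Z.le_gt_cases 0 x) as [hx|hx]; [|lia].
  destruct (Ov_nonneg_descends x phi chi hx hOv) as [hchi hdesc].
  rewrite <- (Z2Nat.id x hx); exact (hbound _ chi hchi hdesc).
Qed.

End Gap.
End Supports.

Theorem lemma7p3 (d : nat) (n m : Z) (hd : (1 <= d)%nat) (hn : 2 <= n) (hm : 2 <= m)
  (H : bspline d -> Prop) (hH : is_hier_gen d n m H)
  (phi psi : bspline d) (k : nat) (hphi : H phi) (hpsi : H psi)
  (hch : chBk d n m k phi psi) :
  exists gpsi gphi : Z,
    is_gap d n m H psi gpsi /\ is_gap d n m H phi gphi /\
    Z.of_nat k <= gpsi <= gphi + Z.of_nat k.
Proof.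
  destruct (gap_exists d n m hm H psi hpsi) as [gpsi hgpsi].
  destruct (gap_exists d n m hm H phi hphi) as [gphi hgphi].
  exists gpsi, gphi; split; [exact hgpsi|split; [exact hgphi|split]].
  - apply (gap_ge d n m H psi phi k gpsi hgpsi hphi).
    exact (supp_descends_chBk d n m hn hm k phi psi hch).
  - assert (hgphi0 : 0 <= gphi)
      by exact (gap_ge d n m H phi phi 0 gphi hgphi hphi (supp_descends_refl d n m hm phi)).
    apply (gap_le d n m H psi gpsi); [exact hgpsi|lia|].
    intros g chi hchi hdesc.
    destruct (Nat.le_gt_cases k g) as [hkg|hgk]; [|lia].
    replace g with ((g - k) + k)%nat in hdesc by lia.
    pose proof (gap_ge d n m H phi chi (g - k) gphi hgphi hchi
                  (supp_descends_chBk_inv d n m hn hm k (g - k) chi phi psi hch hdesc)).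
    lia.
Qed.
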